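(* Let $p_S$ be the critical probability of bond percolation on the non-p.c.f. Sierpinski gasket $S$, as defined in the context. Then $p_S<0.282$.
   Context: Non-p.c.f. Sierpinski gasket: $S_0$ is the triangle $\{v_0,v_1,v_2\}$ with its three edges. $S_n$ is obtained from $S_{n-1}$ by replacing each triangle $\{x,y,z\}$ of $S_{n-1}$, together with its own three edges, by new vertices $m_{xy},m_{yz},m_{zx},c$ belonging only to this triangle and the six triangles $\{x,m_{xy},c\},\{m_{xy},y,c\},\{y,m_{yz},c\},\{m_{yz},z,c\},\{z,m_{zx},c\},\{m_{zx},x,c\}$, each carrying its own three edges. Thus distinct triangles have disjoint edge sets and parallel edges occur. For example, $S_1$ has the $6$ outer edges once and each of the $6$ segments from the center $c$ to the outer vertices doubled. $S$ denotes the limiting graph. Bond percolation with parameter $p$: each edge receives an i.i.d. uniform $[0,1]$ label $\omega(e)$ and is open if $\omega(e)<p$. Define $p_S=\sup\{p\in[0,1]:\mathbb{P}_p(\text{there is an open path from } v_0 \text{ to } v_1 \text{ in } S_n)\to 0 \text{ as } n\to\infty\}$. *)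

From HB Require Import structures.
From mathcomp Require Import all_boot all_order all_algebra.
From mathcomp Require Import all_classical all_reals all_analysis.
From Stdlib Require Import Relations.
Set Implicit Arguments. Unset Strict Implicit. Unset Printing Implicit Defensive.
Import Order.TTheory GRing.Theory Num.Theory.
Local Open Scope classical_set_scope.
Local Open Scope ring_scope.

(* Vertices: the three original vertices v0,v1,v2 ([Root i]) and the vertices
   created when subdividing the triangle with address [a]:
   [New a 0] = m_xy, [New a 1] = m_yz, [New a 2] = m_zx, [New a 3] = c. *)
Inductive vtx : Type :=
  | Root of 'I_3
  | New of seq 'I_6 & 'I_4.

Definition tri := (vtx * vtx * vtx)%type.

Definition i3 (k : nat) : 'I_3 := inord k.
Definition i4 (k : nat) : 'I_4 := inord k.

Definition child (a : seq 'I_6) (t : tri) (i : 'I_6) : tri :=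
  let: (x, y, z) := t in
  let mxy := New a (i4 0) in let myz := New a (i4 1) in
  let mzx := New a (i4 2) in let c := New a (i4 3) in
  match val i with
  | 0 => (x, mxy, c)
  | 1 => (mxy, y, c)
  | 2 => (y, myz, c)
  | 3 => (myz, z, c)
  | 4 => (z, mzx, c)
  | _ => (mzx, x, c)
  end.

Fixpoint corners_aux (pre : seq 'I_6) (t : tri) (rest : seq 'I_6) : tri :=
  match rest with
  | [::] => t
  | i :: r => corners_aux (rcons pre i) (child pre t i) r
  end.

(* Corners of the level-|a| triangle with address a (a = first-level choice
   first); S_0 is the triangle {v0,v1,v2}. *)
Definition corners (a : seq 'I_6) : tri :=
  corners_aux [::] (Root (i3 0), Root (i3 1), Root (i3 2)) a.

(* Edges of S_n: each level-n triangle carries its own three edges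
   (so parallel edges occur). *)
Definition edge (n : nat) := (n.-tuple 'I_6 * 'I_3)%type.

Definition ends n (e : edge n) : vtx * vtx :=
  let: (x, y, z) := corners (val e.1) in
  match val e.2 with
  | 0 => (x, y)
  | 1 => (y, z)
  | _ => (z, x)
  end.

Definition adj n (O : {set edge n}) (u v : vtx) : Prop :=
  exists2 e, e \in O & (ends e = (u, v) \/ ends e = (v, u)).

Definition open_crossing n (O : {set edge n}) : Prop :=
  clos_refl_trans vtx (@adj n O) (Root (i3 0)) (Root (i3 1)).

(* P_p(open path from v0 to v1 in S_n): the edges of S_n are open
   independently with probability p (the law of {e : omega(e) < p} under
   i.i.d. uniform labels), summed over all open-edge configurations O. *)
Definition crossing_prob (R : realType) (p : R) (n : nat) : R :=
  \sum_(O : {set edge n})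
     (p ^+ #|O| * (1 - p) ^+ #|~: O| * (`[< open_crossing O >])%:R).

Definition p_S (R : realType) : R :=
  sup [set p : R | (0 <= p <= 1)%R /\ (crossing_prob p n @[n --> \oo] --> 0%R)].

From HB Require Import structures.
From mathcomp Require Import all_boot all_order all_algebra.
From mathcomp Require Import all_classical all_reals all_analysis.
From mathcomp Require Import ring lra.
From Stdlib Require Import Relations.
Set Implicit Arguments. Unset Strict Implicit. Unset Printing Implicit Defensive.
Import Order.TTheory GRing.Theory Num.Theory.
Local Open Scope ring_scope.

(* For a triangle of S_n, open paths inside it induce a partition of its three
   corners; there are five possible partitions, ordered by refinement.  S_(n+1)
   is made of six copies of S_n, and the partition of S_(n+1) is at least as
   coarse as the one computed from the partitions of the copies: join the copies
   in pairs along their common side, then join the three resulting triangles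
   around the centre.  The six partitions are i.i.d. with the law [law p n] of
   the partition of S_n, and both joins are monotone.  The explicit law nu is a
   sub-fixed point of this renormalization map: nu (x) nu pushed through the side
   join is sigma, and sigma (x) sigma (x) sigma pushed through the centre join
   stochastically dominates nu.  Hence domination of nu passes from level n
   to level n+1; it holds at level 0 for p >= 0.281, so at every level, and
   the crossing probability of S_n stays above nu(v0 ~ v1) = 0.337.  Thus
   p_S <= 0.281. *)

(** * Partitions of the corners of a triangle *)

(* [Pij]: exactly the corners i and j are joined. *)
Inductive part := Pall | P01 | P12 | P20 | Pnone.

Definition part_code (s : part) : nat :=
  match s with Pall => 0 | P01 => 1 | P12 => 2 | P20 => 3 | Pnone => 4 end.
Definition part_decode (n : nat) : part :=
  match n with 0 => Pall | 1 => P01 | 2 => P12 | 3 => P20 | _ => Pnone end.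
Lemma part_codeK : cancel part_code part_decode. Proof. by case. Qed.
HB.instance Definition _ := Equality.copy part (can_type part_codeK).

Definition link01 (s : part) : bool := match s with Pall | P01 => true | _ => false end.
Definition link12 (s : part) : bool := match s with Pall | P12 => true | _ => false end.
Definition link20 (s : part) : bool := match s with Pall | P20 => true | _ => false end.

Definition of_links (a b c : bool) : part :=
  if [|| a && b, b && c | c && a] then Pall
  else if a then P01 else if b then P12 else if c then P20 else Pnone.

Lemma of_linksE a b c :
  [/\ link01 (of_links a b c) = a || b && c, link12 (of_links a b c) = b || c && a
    & link20 (of_links a b c) = c || a && b].
Proof. by case: a; case: b; case: c. Qed.

Definition finer (s t : part) : bool :=
  [&& link01 s ==> link01 t, link12 s ==> link12 t & link20 s ==> link20 t].

(* The non-empty up-sets of [finer]. *)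
Definition upset (k : nat) (s : part) : bool :=
  match k with
  | 0 => link01 s && link12 s
  | 1 => link01 s | 2 => link12 s | 3 => link20 s
  | 4 => link01 s || link12 s | 5 => link12 s || link20 s | 6 => link20 s || link01 s
  | 7 => [|| link01 s, link12 s | link20 s]
  | _ => true
  end.

Lemma upset_finer k s t : finer s t -> upset k s -> upset k t.
Proof.
by do 8 (case: k => [|k]; first by case: s; case: t); case: s; case: t.
Qed.

(* In a graph on the four vertices u, v, w, x with the six given edges,
   [reach] tells whether u and v are connected; [reduce4] is the partition
   induced on the vertices 0, 1, 2 of a graph on 0, 1, 2, 3. *)
Definition reach (uv uw vw ux vx wx : bool) : bool :=
  [|| uv, uw && vw, ux && vx, uw && wx && vx | ux && wx && vw].

Definition reduce4 (e01 e12 e20 e03 e13 e23 : bool) : part :=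
  of_links (reach e01 e20 e12 e03 e13 e23) (reach e12 e01 e20 e13 e23 e03)
           (reach e20 e12 e01 e23 e03 e13).

(* [join_side] glues triangles (x, m, c) and (m, y, c) into (x, y, c);
   [join_centre] glues (x, y, c), (y, z, c), (z, x, c) into (x, y, z). *)
Definition join_side (s t : part) : part :=
  reduce4 false (link12 t) (link20 s) (link01 s) (link01 t) (link12 s || link20 t).

Definition join_centre (a b d : part) : part :=
  reduce4 (link01 a) (link01 b) (link01 d)
    (link20 a || link12 d) (link12 a || link20 b) (link12 b || link20 d).

Definition glue_copies (s0 s1 s2 s3 s4 s5 : part) : part :=
  join_centre (join_side s0 s1) (join_side s2 s3) (join_side s4 s5).

Lemma join_side_finerl s s' t : finer s s' -> finer (join_side s t) (join_side s' t).
Proof. by case: s; case: s'; case: t. Qed.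
Lemma join_side_finerr s t t' : finer t t' -> finer (join_side s t) (join_side s t').
Proof. by case: s; case: t; case: t'. Qed.
Lemma join_centre_finer1 a a' b d : finer a a' -> finer (join_centre a b d) (join_centre a' b d).
Proof. by case: a; case: a'; case: b; case: d. Qed.
Lemma join_centre_finer2 a b b' d : finer b b' -> finer (join_centre a b d) (join_centre a b' d).
Proof. by case: a; case: b; case: b'; case: d. Qed.
Lemma join_centre_finer3 a b d d' : finer d d' -> finer (join_centre a b d) (join_centre a b d').
Proof. by case: a; case: b; case: d; case: d'. Qed.

Section Realization.
Variables (T : Type) (r : T -> T -> Prop).
Hypotheses (r_sym : forall x y, r x y -> r y x)
           (r_trans : forall x y z, r x y -> r y z -> r x z).

Definition realizes (s : part) (x y z : T) : Prop :=
  [/\ link01 s -> r x y, link12 s -> r y z & link20 s -> r z x].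

Lemma of_links_realizes (a b c : bool) x y z :
  (a -> r x y) -> (b -> r y z) -> (c -> r z x) -> realizes (of_links a b c) x y z.
Proof.
move=> hab hbc hca; case: (of_linksE a b c) => e01 e12 e20.
by split; rewrite ?e01 ?e12 ?e20 => /orP[|/andP[]]; eauto.
Qed.

Lemma reach_sound (uv uw vw ux vx wx : bool) u v w x :
  (uv -> r u v) -> (uw -> r u w) -> (vw -> r v w) ->
  (ux -> r u x) -> (vx -> r v x) -> (wx -> r w x) ->
  reach uv uw vw ux vx wx -> r u v.
Proof.
move=> huv huw hvw hux hvx hwx.
rewrite /reach -!andbA.
by case/or4P=> [|/andP[]|/andP[]|/orP[/and3P[]|/and3P[]]]; eauto 8.
Qed.

Lemma reduce4_realizes (e01 e12 e20 e03 e13 e23 : bool) v0 v1 v2 v3 :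
  (e01 -> r v0 v1) -> (e12 -> r v1 v2) -> (e20 -> r v2 v0) ->
  (e03 -> r v0 v3) -> (e13 -> r v1 v3) -> (e23 -> r v2 v3) ->
  realizes (reduce4 e01 e12 e20 e03 e13 e23) v0 v1 v2.
Proof.
move=> h01 h12 h20 h03 h13 h23.
by apply: of_links_realizes; apply: reach_sound; eauto.
Qed.

Lemma join_side_realizes s t x m y c :
  realizes s x m c -> realizes t m y c -> realizes (join_side s t) x y c.
Proof.
case=> sxm smc scx [tmy tyc tcm].
by apply: (reduce4_realizes (v3 := m)) => // [|/orP[]]; eauto.
Qed.

Lemma join_centre_realizes a b d x y z c :
  realizes a x y c -> realizes b y z c -> realizes d z x c ->
  realizes (join_centre a b d) x y z.
Proof.
case=> axy ayc acx [byz bzc bcy] [dzx dxc dcz].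
by apply: (reduce4_realizes (v3 := c)) => //; case/orP; eauto.
Qed.

End Realization.

(** * Laws on partitions and stochastic domination *)

Section PartLaws.
Variable R : realFieldType.
Implicit Types (m n g : part -> R).

Definition expect m g : R :=
  m Pall * g Pall + m P01 * g P01 + m P12 * g P12 + m P20 * g P20 + m Pnone * g Pnone.

Definition dominates m n : Prop :=
  forall k, expect n (fun s => (upset k s)%:R) <= expect m (fun s => (upset k s)%:R).

Definition monotone_part g : Prop := forall s t, finer s t -> g s <= g t.

Lemma ler_expect m g h :
  (forall s, 0 <= m s) -> (forall s, g s <= h s) -> expect m g <= expect m h.
Proof.
move=> m0 gh; rewrite /expect.
by do ![apply: lerD | apply: ler_wpM2l].
Qed.

Lemma expect_ge0 m g : (forall s, 0 <= m s) -> (forall s, 0 <= g s) -> 0 <= expect m g.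
Proof. by move=> m0 g0; rewrite /expect; do ![apply: addr_ge0 | apply: mulr_ge0]. Qed.

Lemma expect_swap m n (G : part -> part -> R) :
  expect m (fun s => expect n (G s)) = expect n (fun t => expect m (G^~ t)).
Proof. rewrite /expect; ring. Qed.

Lemma monotone_expect m (G : part -> part -> R) :
  (forall t, 0 <= m t) -> (forall t, monotone_part (G^~ t)) ->
  monotone_part (fun s => expect m (G s)).
Proof. by move=> m0 G_mono s s' ss'; apply: ler_expect => // t; apply: G_mono. Qed.

(* A monotone nonnegative g is a nonnegative combination of indicators of
   up-sets (layer cake); which up-sets occur depends on the order of
   g P01, g P12, g P20. *)
Lemma dominates_monotone m n g :
  dominates m n -> monotone_part g -> (forall s, 0 <= g s) -> expect n g <= expect m g.
Proof.
move=> mn g_mono g0.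
have := mn 0%N; have := mn 1%N; have := mn 2%N; have := mn 3%N; have := mn 4%N;
have := mn 5%N; have := mn 6%N; have := mn 7%N; have := mn 8%N.
have := g_mono P01 Pall isT; have := g_mono P12 Pall isT; have := g_mono P20 Pall isT.
have := g_mono Pnone P01 isT; have := g_mono Pnone P12 isT; have := g_mono Pnone P20 isT.
have := g0 Pnone.
rewrite /expect /= ?mulr1 ?mulr0 ?addr0 ?add0r.
set A := g Pall; set x := g P01; set y := g P12; set z := g P20; set w := g Pnone.
move=> *.
by case: (lerP x y) => xy; case: (lerP y z) => yz; case: (lerP x z) => xz; nra.
Qed.

Lemma dominates_monotone2 m n (G : part -> part -> R) :
  dominates m n -> (forall s, 0 <= m s) -> (forall s, 0 <= n s) ->
  (forall s t, 0 <= G s t) ->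
  (forall t, monotone_part (G^~ t)) -> (forall s, monotone_part (G s)) ->
  expect n (fun s => expect n (G s)) <= expect m (fun s => expect m (G s)).
Proof.
move=> mn m0 n0 G0 G_mono1 G_mono2.
apply: (@le_trans _ _ (expect m (fun s => expect n (G s)))); last first.
  by apply: ler_expect => // s; apply: dominates_monotone.
rewrite expect_swap [X in _ <= X]expect_swap.
apply: ler_expect => // t; exact: dominates_monotone.
Qed.

Lemma monotone_upset k : monotone_part (fun s => (upset k s)%:R).
Proof. by move=> s t /upset_finer st; rewrite ler_nat; case: (upset k s) (st k) => // ->. Qed.

End PartLaws.

(** * The renormalization inequality *)

Definition nu {R : realFieldType} (s : part) : R :=
  match s with
  | Pall => 24%:R / 125%:R
  | P01 | P12 | P20 => 29%:R / 200%:R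
  | Pnone => 373%:R / 1000%:R
  end.

Definition sigma {R : realFieldType} (s : part) : R :=
  match s with
  | Pall => 169249%:R / 1000000%:R
  | P01 => 841%:R / 40000%:R
  | P12 | P20 => 27077%:R / 125000%:R
  | Pnone => 188247%:R / 500000%:R
  end.

Ltac eval_parts :=
  cbv beta iota delta [expect nu sigma join_side join_centre glue_copies reduce4 reach of_links
    link01 link12 link20 upset andb orb nat_of_bool].

Section Renormalization.
Variable R : realFieldType.
Implicit Types (m : part -> R).
Local Notation nu := (@nu R).
Local Notation sigma := (@sigma R).

Lemma nu_ge0 s : 0 <= nu s. Proof. by case: s; rewrite divr_ge0 ?ler0n. Qed.
Lemma sigma_ge0 s : 0 <= sigma s. Proof. by case: s; rewrite divr_ge0 ?ler0n. Qed.

Lemma expect_join_side_nu (G : part -> R) :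
  expect nu (fun s => expect nu (fun t => G (join_side s t))) = expect sigma G.
Proof. eval_parts; lra. Qed.

Lemma nu_le_join_centre_sigma k :
  expect nu (fun s => (upset k s)%:R) <=
  expect sigma (fun a => expect sigma (fun b => expect sigma (fun c =>
    (upset k (join_centre a b c))%:R))).
Proof. by do 8 (case: k => [|k]; first by eval_parts; lra); eval_parts; lra. Qed.

Lemma sigma_le_join_side m G :
  dominates m nu -> (forall s, 0 <= m s) -> monotone_part G -> (forall s, 0 <= G s) ->
  expect sigma G <= expect m (fun s => expect m (fun t => G (join_side s t))).
Proof.
move=> m_nu m0 G_mono G0; rewrite -expect_join_side_nu.
apply: dominates_monotone2 => // [|t s s' ss'|s t t' tt']; first exact: nu_ge0.
- exact/G_mono/join_side_finerl.
- exact/G_mono/join_side_finerr.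
Qed.

Lemma nu_le_glue_copies m k :
  dominates m nu -> (forall s, 0 <= m s) ->
  expect nu (fun s => (upset k s)%:R) <=
  expect m (fun s0 => expect m (fun s1 => expect m (fun s2 => expect m (fun s3 =>
  expect m (fun s4 => expect m (fun s5 => (upset k (glue_copies s0 s1 s2 s3 s4 s5))%:R)))))).
Proof.
move=> m_nu m0; apply: le_trans (nu_le_join_centre_sigma k) _.
pose K a b c : R := (upset k (join_centre a b c))%:R.
have K0 a b c : 0 <= K a b c by [].
have K_mono1 b c : monotone_part (K^~ b ^~ c).
  by move=> a a' /join_centre_finer1 h; apply: monotone_upset.
have K_mono2 a c : monotone_part (K a ^~ c).
  by move=> b b' /join_centre_finer2 h; apply: monotone_upset.
have K_mono3 a b : monotone_part (K a b).
  by move=> c c' /join_centre_finer3 h; apply: monotone_upset.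
have E0 a b : 0 <= expect sigma (K a b) by apply: expect_ge0 => //; exact: sigma_ge0.
apply: le_trans (sigma_le_join_side m_nu m0 _ _) _.
- apply: monotone_expect => [|b]; first exact: sigma_ge0.
  by apply: monotone_expect => [|c]; [exact: sigma_ge0 | exact: K_mono1].
- by move=> a; apply: expect_ge0 => [s|b]; [exact: sigma_ge0 | exact: E0].
apply: ler_expect => // s0; apply: ler_expect => // s1.
apply: le_trans (sigma_le_join_side m_nu m0 _ _) _.
- by apply: monotone_expect => [|c]; [exact: sigma_ge0 | exact: K_mono2].
- by move=> b; exact: E0.
apply: ler_expect => // s2; apply: ler_expect => // s3.
exact: (sigma_le_join_side m_nu m0 (K_mono3 _ _) (K0 _ _)).
Qed.

End Renormalization.

(** * Copies of S_n in S_(n+1) *)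

Definition R0 := Root (i3 0).
Definition R1 := Root (i3 1).
Definition R2 := Root (i3 2).
Definition i6 (k : nat) : 'I_6 := inord k.

Lemma val_i3 k : (k < 3)%N -> val (i3 k) = k. Proof. exact: inordK. Qed.
Lemma val_i6 k : (k < 6)%N -> val (i6 k) = k. Proof. exact: inordK. Qed.

Definition corner (t : tri) (j : 'I_3) : vtx :=
  let: (x, y, z) := t in match val j with 0 => x | 1 => y | _ => z end.

Definition map_tri (f : vtx -> vtx) (t : tri) : tri :=
  let: (x, y, z) := t in (f x, f y, f z).

Lemma tri_eta (t : tri) : t = (corner t (i3 0), corner t (i3 1), corner t (i3 2)).
Proof. by case: t => [[x y] z]; rewrite /corner !val_i3. Qed.

Definition embed (i : 'I_6) (v : vtx) : vtx :=
  match v with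
  | Root j => corner (child [::] (R0, R1, R2) i) j
  | New a k => New (i :: a) k
  end.

Lemma corners_aux_embed i pre t rest :
  corners_aux (i :: pre) (map_tri (embed i) t) rest =
  map_tri (embed i) (corners_aux pre t rest).
Proof.
elim: rest pre t => [|j r IH] pre [[x y] z] //=.
by rewrite -IH; congr corners_aux; rewrite /child; case: (val j) => [|[|[|[|[|?]]]]].
Qed.

Lemma corners_cons i a : corners (i :: a) = map_tri (embed i) (corners a).
Proof. by rewrite /corners /= -corners_aux_embed; congr corners_aux; rewrite [LHS]tri_eta. Qed.

Definition embed_edge n (i : 'I_6) (e : edge n) : edge n.+1 := ([tuple of i :: val e.1], e.2).

Lemma ends_econs n i (e : edge n) :
  ends (embed_edge i e) = (embed i (ends e).1, embed i (ends e).2).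
Proof.
rewrite /ends /= corners_cons.
by case: (corners (val e.1)) => [[x y] z] /=; case: (val e.2) => [|[|?]].
Qed.

Definition subconf n (O : {set edge n.+1}) (i : 'I_6) : {set edge n} :=
  [set e | embed_edge i e \in O].

Definition conn n (O : {set edge n}) := clos_refl_trans vtx (@adj n O).

Lemma conn_sym n (O : {set edge n}) u v : conn O u v -> conn O v u.
Proof.
elim=> [x y [e eO exy]|x|x y z _ H1 _ H2]; last exact: rt_trans H2 H1.
- by apply: rt_step; exists e; last by case: exy; [right|left].
- exact: rt_refl.
Qed.

Lemma conn_trans n (O : {set edge n}) u v w : conn O u v -> conn O v w -> conn O u w.
Proof. exact: rt_trans. Qed.

Lemma conn_embed n (O : {set edge n.+1}) i u v :
  conn (subconf O i) u v -> conn O (embed i u) (embed i v).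
Proof.
elim=> [x y [e eO exy]|x|x y z _ H1 _ H2]; last exact: rt_trans H1 H2.
- apply: rt_step; exists (embed_edge i e); first by rewrite inE in eO.
  by rewrite ends_econs; case: exy => -> /=; [left|right].
- exact: rt_refl.
Qed.

Definition state n (O : {set edge n}) : part :=
  of_links `[< conn O R0 R1 >] `[< conn O R1 R2 >] `[< conn O R2 R0 >].

Lemma state_links n (O : {set edge n}) :
  [/\ link01 (state O) = `[< conn O R0 R1 >], link12 (state O) = `[< conn O R1 R2 >]
    & link20 (state O) = `[< conn O R2 R0 >]].
Proof.
case: (of_linksE `[< conn O R0 R1 >] `[< conn O R1 R2 >] `[< conn O R2 R0 >]).
rewrite /state => -> -> ->.
by split; apply/idP/idP => [/orP[//|/andP[/asboolP h1 /asboolP h2]]|->//];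
  exact/asboolP/conn_sym/(conn_trans h1 h2).
Qed.

Lemma state_realizes n (O : {set edge n}) : realizes (@conn n O) (state O) R0 R1 R2.
Proof. by case: (state_links O) => e01 e12 e20; split; rewrite ?e01 ?e12 ?e20 => /asboolP. Qed.

Lemma finer_state n (O : {set edge n}) s :
  realizes (@conn n O) s R0 R1 R2 -> finer s (state O).
Proof.
case=> h01 h12 h20; rewrite /finer; case: (state_links O) => -> -> ->.
by apply/and3P; split; apply/implyP => hs; apply/asboolP; auto.
Qed.

Lemma substate_realizes n (O : {set edge n.+1}) i :
  let: (x, y, z) := child [::] (R0, R1, R2) i in
  realizes (@conn n.+1 O) (state (subconf O i)) x y z.
Proof.
rewrite [child _ _ _]tri_eta.
by case: (state_realizes (subconf O i)) => h01 h12 h20;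
  split=> [/h01|/h12|/h20]; apply: conn_embed.
Qed.

Lemma finer_glue_copies_state n (O : {set edge n.+1}) :
  let s i := state (subconf O (i6 i)) in
  finer (glue_copies (s 0) (s 1) (s 2) (s 3) (s 4) (s 5)) (state O).
Proof.
have cs := @conn_sym n.+1 O; have ct := @conn_trans n.+1 O.
have := substate_realizes O (i6 0); have := substate_realizes O (i6 1).
have := substate_realizes O (i6 2); have := substate_realizes O (i6 3).
have := substate_realizes O (i6 4); have := substate_realizes O (i6 5).
rewrite /child !val_i6 //= => c5 c4 c3 c2 c1 c0.
apply: finer_state; apply: join_centre_realizes => //; apply: join_side_realizes; eassumption.
Qed.

Lemma open_crossing_state n (O : {set edge n}) : `[< open_crossing O >] = link01 (state O).
Proof. by case: (state_links O) => ->. Qed.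

Lemma big_pairE (T : Type) (idx : T) (op : Monoid.com_law idx) (I J : finType)
    (F : I * J -> T) :
  \big[op/idx]_(t : I * J) F t = \big[op/idx]_(i : I) \big[op/idx]_(j : J) F (i, j).
Proof. by rewrite pair_bigA; apply: eq_bigr => -[]. Qed.

Definition tl n (t : n.+1.-tuple 'I_6) : n.-tuple 'I_6 := [tuple of behead t].

Lemma tl_cons n i (t : n.-tuple 'I_6) : tl [tuple of i :: val t] = t.
Proof. exact: val_inj. Qed.

Lemma embed_edge_eta n (e : edge n.+1) : embed_edge (thead e.1) (tl e.1, e.2) = e.
Proof. by case: e => -[[|x s] hs] j; congr pair; apply: val_inj. Qed.

Definition sixfold (T : Type) := (T * (T * (T * (T * (T * T)))))%type.

Definition nth6 (T : Type) (t : sixfold T) (i : 'I_6) : T :=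
  match val i with
  | 0 => t.1 | 1 => t.2.1 | 2 => t.2.2.1 | 3 => t.2.2.2.1 | 4 => t.2.2.2.2.1
  | _ => t.2.2.2.2.2
  end.

Definition conf_of_subs n (t : sixfold {set edge n}) : {set edge n.+1} :=
  [set e | (tl e.1, e.2) \in nth6 t (thead e.1)].

Definition subconfs n (O : {set edge n.+1}) : sixfold {set edge n} :=
  (subconf O (i6 0), (subconf O (i6 1), (subconf O (i6 2),
  (subconf O (i6 3), (subconf O (i6 4), subconf O (i6 5)))))).

Lemma mem_conf_of_subs n (t : sixfold {set edge n}) i e :
  (embed_edge i e \in conf_of_subs t) = (e \in nth6 t i).
Proof. by rewrite inE /= theadE tl_cons; case: e. Qed.

Lemma subconf_conf_of_subs n (t : sixfold {set edge n}) i : subconf (conf_of_subs t) i = nth6 t i.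
Proof. by apply/setP => e; rewrite inE mem_conf_of_subs. Qed.

Lemma conf_of_subsK n : cancel (@conf_of_subs n) (@subconfs n).
Proof.
move=> t; rewrite /subconfs !subconf_conf_of_subs /nth6 !val_i6 //.
by case: t => [a [b [c [d [e f]]]]].
Qed.

Lemma subconfsK n : cancel (@subconfs n) (@conf_of_subs n).
Proof.
move=> O; apply/setP => e; rewrite inE -[in RHS](embed_edge_eta e).
case: (thead e.1) => -[|[|[|[|[|[|//]]]]]] hi; rewrite /= inE;
  by congr (_ \in O); congr embed_edge; apply: val_inj; rewrite /= val_i6.
Qed.

Section Weights.
Variables (R : realFieldType) (p : R).
Hypothesis p01 : 0 <= p <= 1.

Definition weight n (O : {set edge n}) : R :=
  \prod_(e : edge n) (if e \in O then p else 1 - p).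

Lemma weight_ge0 n (O : {set edge n}) : 0 <= weight O.
Proof.
case/andP: p01 => p0 p1.
by apply: prodr_ge0 => e _; case: ifP => _ //; rewrite subr_ge0.
Qed.

Lemma weightE n (O : {set edge n}) : p ^+ #|O| * (1 - p) ^+ #|~: O| = weight O.
Proof.
rewrite /weight (bigID (mem O)) /=.
rewrite (eq_bigr (fun _ => p)) => [|e ->//]; rewrite prodr_const.
rewrite (eq_bigr (fun _ => 1 - p)) => [|e /negbTE ->//].
by rewrite (eq_bigl (mem (~: O))) ?prodr_const // => e; rewrite !inE.
Qed.

Definition law n (s : part) : R := \sum_(O : {set edge n}) weight O * (state O == s)%:R.

Lemma law_ge0 n s : 0 <= law n s.
Proof. by apply: sumr_ge0 => O _; rewrite mulr_ge0 ?weight_ge0. Qed.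

Lemma sum_weight_state n (g : part -> R) :
  \sum_(O : {set edge n}) weight O * g (state O) = expect (law n) g.
Proof.
rewrite /expect /law !big_distrl -!big_split /=.
by apply: eq_bigr => O _; case: (state O) => /=; ring.
Qed.

Lemma weight_conf_of_subs n (t : sixfold {set edge n}) :
  weight (conf_of_subs t) = weight t.1 * weight t.2.1 * weight t.2.2.1 * weight t.2.2.2.1 *
                     weight t.2.2.2.2.1 * weight t.2.2.2.2.2.
Proof.
rewrite /weight (reindex (fun q : 'I_6 * edge n => embed_edge q.1 q.2)) /=; last first.
  exists (fun e : edge n.+1 => (thead e.1, (tl e.1, e.2))) => [[i [t1 j]] _|e _].
    by rewrite /embed_edge /= theadE tl_cons.
  exact: embed_edge_eta.
rewrite big_pairE /=.
under eq_bigr => i _ do under eq_bigr => e _ do rewrite mem_conf_of_subs.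
by rewrite !big_ord_recl big_ord0 mulr1 /= !mulrA.
Qed.

Lemma sum_weight_subconf n (F : {set edge n} -> {set edge n} -> {set edge n} ->
    {set edge n} -> {set edge n} -> {set edge n} -> R) :
  \sum_(O : {set edge n.+1}) weight O *
    F (subconf O (i6 0)) (subconf O (i6 1)) (subconf O (i6 2))
      (subconf O (i6 3)) (subconf O (i6 4)) (subconf O (i6 5)) =
  \sum_a weight a * \sum_b weight b * \sum_c weight c *
  \sum_d weight d * \sum_e weight e * \sum_f weight f * F a b c d e f.
Proof.
rewrite (reindex (@conf_of_subs n)) /=; last by exists (@subconfs n) => t _; [exact: conf_of_subsK | exact: subconfsK].
under eq_bigr => t _ do rewrite weight_conf_of_subs !subconf_conf_of_subs /nth6 !val_i6 //.
rewrite big_pairE; apply: eq_bigr => a _; rewrite big_distrr.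
rewrite big_pairE; apply: eq_bigr => b _; rewrite [RHS]mulrA big_distrr.
rewrite big_pairE; apply: eq_bigr => c _; rewrite [RHS]mulrA big_distrr.
rewrite big_pairE; apply: eq_bigr => d _; rewrite [RHS]mulrA big_distrr.
rewrite big_pairE; apply: eq_bigr => e _; rewrite [RHS]mulrA big_distrr.
by apply: eq_bigr => f _ /=; ring.
Qed.

Lemma sum_weight_substates n (G : part -> part -> part -> part -> part -> part -> R) :
  \sum_(O : {set edge n.+1}) weight O *
    G (state (subconf O (i6 0))) (state (subconf O (i6 1))) (state (subconf O (i6 2)))
      (state (subconf O (i6 3))) (state (subconf O (i6 4))) (state (subconf O (i6 5))) =
  expect (law n) (fun s0 => expect (law n) (fun s1 => expect (law n) (fun s2 =>
  expect (law n) (fun s3 => expect (law n) (fun s4 => expect (law n) (fun s5 =>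
    G s0 s1 s2 s3 s4 s5)))))).
Proof.
rewrite (sum_weight_subconf (fun a b c d e f =>
  G (state a) (state b) (state c) (state d) (state e) (state f))).
by do 6 (rewrite -sum_weight_state; apply: eq_bigr => ? _; congr (_ * _)).
Qed.

End Weights.

Definition edge0 (j : 'I_3) : edge 0 := ([tuple], j).

Lemma edge0_eta (e : edge 0) : edge0 e.2 = e.
Proof. by case: e => t j; rewrite /edge0 (tuple0 t). Qed.

Lemma ends_edge0 : [/\ ends (edge0 (i3 0)) = (R0, R1), ends (edge0 (i3 1)) = (R1, R2)
  & ends (edge0 (i3 2)) = (R2, R0)].
Proof. by rewrite /ends /= !val_i3. Qed.

Lemma finer_state0 (O : {set edge 0}) :
  finer (of_links (edge0 (i3 0) \in O) (edge0 (i3 1) \in O) (edge0 (i3 2) \in O)) (state O).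
Proof.
case: ends_edge0 => E0 E1 E2.
apply: finer_state; apply: of_links_realizes;
  [exact: conn_sym | exact: conn_trans | move=> h; apply: rt_step ..].
- by exists (edge0 (i3 0)); last left.
- by exists (edge0 (i3 1)); last left.
- by exists (edge0 (i3 2)); last left.
Qed.

Definition conf0 (b : bool * (bool * bool)) : {set edge 0} :=
  [set e | match val e.2 with 0 => b.1 | 1 => b.2.1 | _ => b.2.2 end].

Definition links0 (O : {set edge 0}) : bool * (bool * bool) :=
  (edge0 (i3 0) \in O, (edge0 (i3 1) \in O, edge0 (i3 2) \in O)).

Lemma links0K : cancel links0 conf0.
Proof.
move=> O; apply/setP => e; rewrite inE -[in RHS](edge0_eta e).
by case: e => t [[|[|[|//]]] hj] /=; congr (edge0 _ \in O); apply: val_inj; rewrite /= val_i3.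
Qed.

Lemma conf0K : cancel conf0 links0.
Proof. by case=> b0 [b1 b2]; rewrite /links0 !inE /= !val_i3. Qed.

Lemma weight_conf0 (R : realFieldType) (p : R) b :
  weight p (conf0 b) =
  (if b.1 then p else 1 - p) * (if b.2.1 then p else 1 - p) * (if b.2.2 then p else 1 - p).
Proof.
rewrite /weight (reindex edge0) /=; last by exists (fun e : edge 0 => e.2) => [j|e] _; last exact: edge0_eta.
under eq_bigr => j _ do rewrite inE /=.
by rewrite !big_ord_recl big_ord0 mulr1 /= mulrA.
Qed.

Lemma law0_dominates_nu (R : realFieldType) (p : R) :
  281%:R / 1000%:R <= p <= 1 -> dominates (law p 0) nu.
Proof.
move=> /andP[p_ge p_le] k.
have p01 : 0 <= p <= 1 by rewrite p_le (le_trans _ p_ge) ?divr_ge0 ?ler0n.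
rewrite -sum_weight_state.
apply: (@le_trans _ _ (\sum_(O : {set edge 0}) weight p O *
    (upset k (of_links (links0 O).1 (links0 O).2.1 (links0 O).2.2))%:R)); last first.
  apply: ler_sum => O _; rewrite ler_wpM2l ?weight_ge0 //.
  exact/monotone_upset/finer_state0.
rewrite (reindex conf0); last by exists links0 => ? _; [exact: conf0K | exact: links0K].
under eq_bigr => b _ do rewrite conf0K weight_conf0.
rewrite !big_pairE !big_bool /= !big_pairE !big_bool /=.
(* Certificates for lra: products of the nonnegative p - 0.281 and 1 - p. *)
have u0 : 0 <= p - 281%:R / 1000%:R by lra.
have v0 : 0 <= 1 - p by lra.
have h1 := mulr_ge0 u0 v0; have h2 := mulr_ge0 u0 u0; have h3 := mulr_ge0 v0 v0.
have h4 := mulr_ge0 h1 u0; have h5 := mulr_ge0 h1 v0; have h6 := mulr_ge0 h2 u0.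
have h7 := mulr_ge0 h3 v0.
by do 8 (case: k => [|k]; first by eval_parts; lra); eval_parts; lra.
Qed.

Lemma law_succ_dominates_nu (R : realFieldType) (p : R) n :
  0 <= p <= 1 -> dominates (law p n) nu -> dominates (law p n.+1) nu.
Proof.
move=> p01 n_nu k; rewrite -sum_weight_state.
apply: le_trans (nu_le_glue_copies k n_nu (law_ge0 p01 n)) _.
rewrite -sum_weight_substates; apply: ler_sum => O _.
by rewrite ler_wpM2l ?weight_ge0 //; exact/monotone_upset/finer_glue_copies_state.
Qed.

Lemma law_dominates_nu (R : realFieldType) (p : R) n :
  281%:R / 1000%:R <= p <= 1 -> dominates (law p n) nu.
Proof.
move=> hp; have p01 : 0 <= p <= 1.
  by case/andP: hp => p_ge ->; rewrite (le_trans _ p_ge) ?divr_ge0 ?ler0n.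
elim: n => [|n]; [exact: law0_dominates_nu | exact: law_succ_dominates_nu].
Qed.

Lemma crossing_prob_lower_bound (R : realType) (p : R) n :
  281%:R / 1000%:R <= p <= 1 -> 337%:R / 1000%:R <= crossing_prob p n.
Proof.
move=> hp; rewrite /crossing_prob.
under eq_bigr => O _ do rewrite weightE open_crossing_state.
rewrite (sum_weight_state p n (fun s => (link01 s)%:R)); apply: le_trans (law_dominates_nu n hp 1%N).
by eval_parts; lra.
Qed.

Import numFieldNormedType.Exports.
Local Open Scope classical_set_scope.

Lemma lbound_cvg (R : realType) (u : nat -> R) (a l : R) :
  u n @[n --> \oo] --> l -> (forall n, a <= u n) -> a <= l.
Proof.
move=> ul ua.
exact: (@closed_cvg _ _ _ _ u [set x | a <= x] (@closed_ge _ a) (nearW _ ua) l ul).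
Qed.

Theorem theorem4p5 (R : realType) : p_S R < 282%:R / 1000%:R.
Proof.
rewrite /p_S; set S := (X in sup X).
have S_ub : ubound S (281%:R / 1000%:R).
  move=> p [/andP[_ p_le1] p_cvg]; rewrite leNgt; apply/negP => p_gt.
  have lb n : 337%:R / 1000%:R <= crossing_prob p n.
    by apply: crossing_prob_lower_bound; rewrite (ltW p_gt).
  by have := lbound_cvg p_cvg lb; lra.
have supS_le : sup S <= 281%:R / 1000%:R.
  have [->|/set0P S0] := eqVneq S set0; last exact: ge_sup.
  by rewrite sup0 divr_ge0 ?ler0n.
by apply: le_lt_trans supS_le _; lra.
Qed.
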